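(* Let $(f_0, M_0, \Lambda_0, \mathcal{Q}_0)$ be a SIMDG with induced set $\mathcal{P}_0$ and training distribution $P_{\mathrm{tr}}$, and let $R$, $\gamma_0$ and the BCF $f_\star$ be as in the context. Then $f_\star$ is invariant, i.e. $P_{\mathrm{tr}}^{Y-f_\star(X)}=P^{Y-f_\star(X)}$ for all $P\in\mathcal{P}_0$. Moreover, with $f_{\mathrm{LS}}(x):=\mathrm{E}_{P_{\mathrm{tr}}}[Y\mid X=x]$ and $\mathcal{R}(P,f):=\mathrm{E}_P[(Y-f(X))^2]$, $$\mathcal{R}(P_{\mathrm{tr}}, f_\star)=\mathcal{R}(P_{\mathrm{tr}}, f_{\mathrm{LS}})+\mathrm{E}_{P_{\mathrm{tr}}}\Big[\big(\mathrm{E}_{P_{\mathrm{tr}}}[\gamma_0(V)\mid R^\top X]-\mathrm{E}_{P_{\mathrm{tr}}}[\gamma_0(V)\mid X]\big)^2\Big].$$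
   Context: Fix integers $p,r\ge 1$. A SIMDG is a tuple $(f_0, M_0, \Lambda_0, \mathcal{Q}_0)$ where $f_0:\mathbb{R}^p\to\mathbb{R}$ is measurable, $M_0\in\mathbb{R}^{p\times r}$, $\Lambda_0$ is a distribution on $\mathbb{R}^{1+p}$ such that $(U,V)\sim\Lambda_0$ satisfies $\mathrm{E}[(U,V)]=0$ and $\mathrm{E}[\|(U,V)\|_2^2]<\infty$, and $\mathcal{Q}_0$ is a set of distributions on $\mathbb{R}^r$. For each $Q\in\mathcal{Q}_0$ the model induces a distribution $P$ of $(U,V,X,Y,Z)$ by drawing $((U,V),Z)\sim\Lambda_0\otimes Q$ and setting $X = M_0 Z + V$, $Y = f_0(X)+U$; $\mathcal{P}_0$ is the set of all such induced distributions. Standing setting: $\sup_{P\in\mathcal{P}_0}\mathrm{E}_P[f_0(X)]^2<\infty$; $Q_{\mathrm{tr}}\in\mathcal{Q}_0$ satisfies $\mathrm{E}_{Q_{\mathrm{tr}}}[Z]=0$ and $\mathrm{E}_{Q_{\mathrm{tr}}}[ZZ^\top]\succ 0$; $P_{\mathrm{tr}}$ is the distribution induced by $Q_{\mathrm{tr}}$. $P^{W}$ denotes the distribution of $W$ under $P$. Let $q=\mathrm{rank}(M_0)$; if $q<p$, $R\in\mathbb{R}^{p\times(p-q)}$ has columns forming an orthonormal basis of $\ker(M_0^\top)$, and if $q=p$, $R$ is the zero vector in $\mathbb{R}^{p\times 1}$. $\gamma_0(v):=\mathrm{E}_{P_{\mathrm{tr}}}[U\mid V=v]$. The boosted control function is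 $f_\star(x):=f_0(x)+\mathrm{E}_{P_{\mathrm{tr}}}[\gamma_0(V)\mid R^\top X = R^\top x]$ (a fixed function, defined for $P_{\mathrm{tr}}$-a.e. $x$). *)

From HB Require Import structures.
From mathcomp Require Import all_boot all_order all_algebra.
From mathcomp Require Import all_classical all_reals all_analysis.
Set Implicit Arguments. Unset Strict Implicit. Unset Printing Implicit Defensive.
Import numFieldNormedType.Exports.
Import Order.TTheory GRing.Theory Num.Theory.
Local Open Scope classical_set_scope.
Local Open Scope ring_scope.

Definition coord_sets (R : realType) (n : nat) : set (set 'cV[R]_n) :=
  fun S => exists i : 'I_n, exists A : set R^o, measurable A /\
           S = (fun x : 'cV[R]_n => x i ord0) @^-1` A.

Arguments coord_sets : clear implicits.

(* R^n with its Borel (= product) sigma-algebra, generated by coordinates. *)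
Notation vecT R n := (g_sigma_algebraType (coord_sets R n)).

(* Version of a conditional expectation as a function of phi (Doob–Dynkin form):
   g is a (measurable) version of  x |-> E_mu[W | phi = x]  iff
   g is measurable, g o phi is integrable, and for every measurable B,
   E_mu[W 1{phi in B}] = E_mu[g(phi) 1{phi in B}]. *)
Definition is_cond_exp d d' (T : measurableType d) (S : measurableType d')
  (R : realType) (mu : {measure set T -> \bar R}) (W : T -> R) (phi : T -> S)
  (g : S -> R) : Prop :=
  measurable_fun setT g /\
  mu.-integrable setT (fun w => (g (phi w))%:E) /\
  forall B : set S, measurable B ->
    (\int[mu]_(w in phi @^-1` B) (W w)%:E =
     \int[mu]_(w in phi @^-1` B) (g (phi w))%:E)%E.

(* The SIMDG sample space: omega = ((u, v), z) drawn from Lambda0 (x) Q. *)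
Notation Omega R p r := ((R * vecT R p) * vecT R r)%type.

Section simdg.
Variables (R : realType) (p r : nat) (f0 : vecT R p -> R) (M0 : 'M[R]_(p, r)).
Definition U_ (w : Omega R p r) : R := w.1.1.
Definition V_ (w : Omega R p r) : vecT R p := w.1.2.
Definition Z_ (w : Omega R p r) : vecT R r := w.2.
Definition X_ (w : Omega R p r) : vecT R p := M0 *m Z_ w + V_ w.
Definition Y_ (w : Omega R p r) : R := f0 (X_ w) + U_ w.
End simdg.
Arguments U_ {R p r}.
Arguments V_ {R p r}.
Arguments Z_ {R p r}.
Arguments X_ {R p r}.
Arguments Y_ {R p r}.

(* the boosted control function  f*(x) = f0(x) + h(R^T x),
   with h a version of  E_Ptr[gamma0(V) | R^T X = .] *)
Definition bcf (R : realType) (p k : nat) (f0 : vecT R p -> R)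
  (Rm : 'M[R]_(p, k)) (h : vecT R k -> R) (x : vecT R p) : R :=
  f0 x + h (Rm^T *m x).

From HB Require Import structures.
From mathcomp Require Import all_boot all_order all_algebra.
From mathcomp Require Import all_classical all_reals all_analysis.
From mathcomp Require Import measurable_realfun.
From mathcomp Require Import ring lra.
From mathcomp Require Import finmap.
Import numFieldNormedType.Exports.
Import Order.TTheory GRing.Theory Num.Theory.
Local Open Scope classical_set_scope.
Local Open Scope ring_scope.

(* Since R^T M0 = 0 we have R^T X = R^T V, so the residual Y - f*(X) = U - h(R^T V)
   is a function of (U, V) alone, and its law is the same under every Lam0 (x) Q.
   For the risk: (U, V) is independent of Z, so by Fubini the version g of
   E[gamma0(V) | X] is also a version of E[U | X].  Hence fLS(X) - f0(X) and g(X)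
   agree in L^2, and Y - fLS(X) has the same second moment as U - g(X).  Finally
   U - h(R^T X) = (U - g(X)) + (g(X) - h(R^T X)) is an orthogonal sum: the first
   term is a conditional-expectation residual, the second a function of X.
   Conditional expectations of square-integrable variables are square integrable
   (truncation and monotone convergence), which legitimates these L^2 arguments. *)

Section vector_measurability.
Context {R : realType}.

Lemma measurable_coord {n} (i : 'I_n) :
  measurable_fun setT (fun x : vecT R n => x i ord0).
Proof.
move=> _ A mA; rewrite setTI; apply: sub_sigma_algebra.
by exists i, A.
Qed.

Lemma measurable_vec_coords {d} {T : measurableType d} {n} (f : T -> vecT R n) :
  (forall i : 'I_n, measurable_fun setT (fun w => f w i ord0)) ->
  measurable_fun setT f.
Proof.
move=> mf; apply: (@measurability _ _ _ _ setT f (coord_sets R n)) => //.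
move=> _ [_ [i [A [mA ->]]] <-].
by have := mf i measurableT A mA.
Qed.

Lemma measurable_mulmx {d} {T : measurableType d} {m n} (A : 'M[R]_(m, n))
    {f : T -> vecT R n} :
  measurable_fun setT f -> measurable_fun setT (fun w => (A *m f w : vecT R m)).
Proof.
move=> mf; apply: measurable_vec_coords => i.
under eq_fun do rewrite mxE.
apply: measurable_sum => j; apply: measurable_funM => //.
exact: measurableT_comp (measurable_coord j) mf.
Qed.

Lemma measurable_addmx {d} {T : measurableType d} {n} {f g : T -> vecT R n} :
  measurable_fun setT f -> measurable_fun setT g ->
  measurable_fun setT (fun w => (f w + g w : vecT R n)).
Proof.
move=> mf mg; apply: measurable_vec_coords => i.
under eq_fun do rewrite mxE.
by apply: measurable_funD; apply: measurableT_comp (measurable_coord i) _.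
Qed.

End vector_measurability.

Definition sq_integrable {d} {T : measurableType d} {R : realType}
    (P : probability T R) (F : T -> R) :=
  measurable_fun setT F /\ P.-integrable setT (fun x => (F x ^+ 2)%:E).

Definition expect {d} {T : measurableType d} {R : realType}
    (P : probability T R) (F : T -> R) : R :=
  fine (\int[P]_x (F x)%:E).

Section square_integrable.
Context {d} {T : measurableType d} {R : realType} {P : probability T R}.
Implicit Types F G : T -> R.

Lemma integrableD_EFin {F G} :
  P.-integrable setT (fun x => (F x)%:E) -> P.-integrable setT (fun x => (G x)%:E) ->
  P.-integrable setT (fun x => (F x + G x)%:E).
Proof.
by move=> iF iG; apply: (eq_integrable measurableT _ _ _ (integrableD measurableT iF iG)).
Qed.

Lemma integrableZ_EFin {F} c :
  P.-integrable setT (fun x => (F x)%:E) ->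
  P.-integrable setT (fun x => (c * F x)%:E).
Proof.
by move=> iF; apply: (eq_integrable measurableT _ _ _ (integrableZl measurableT c iF)).
Qed.

Lemma sq_integrable_mul {F G} : sq_integrable P F -> sq_integrable P G ->
  P.-integrable setT (fun x => (F x * G x)%:E).
Proof.
move=> [mF iF] [mG iG].
apply: (le_integrable _ _ _ (integrableD measurableT iF iG)) => //.
  by apply/measurable_EFinP; exact: measurable_funM.
move=> x _ /=; rewrite lee_fin normrM.
rewrite (ger0_norm (addr_ge0 (sqr_ge0 _) (sqr_ge0 _))).
rewrite -(real_normK (num_real (F x))) -(real_normK (num_real (G x))).
have := normr_ge0 (F x); have := normr_ge0 (G x); nra.
Qed.

Lemma sq_integrable_integrable {F} : sq_integrable P F ->
  P.-integrable setT (fun x => (F x)%:E).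
Proof.
move=> sF; have s1 : sq_integrable P (fun=> 1).
  by split; [exact: measurable_cst | exact: finite_measure_integrable_cst].
apply: (eq_integrable measurableT _ _ _ (sq_integrable_mul sF s1)) => // x _.
by rewrite mulr1.
Qed.

Lemma sq_integrableD {F G} : sq_integrable P F -> sq_integrable P G ->
  sq_integrable P (fun x => F x + G x).
Proof.
move=> sF sG; split; first exact: measurable_funD sF.1 sG.1.
have iFG := integrableZ_EFin 2 (sq_integrable_mul sF sG).
apply: (eq_integrable measurableT _ _ _
  (integrableD_EFin (integrableD_EFin sF.2 iFG) sG.2)) => //.
by move=> x _; congr EFin; ring.
Qed.

Lemma sq_integrableN {F} : sq_integrable P F -> sq_integrable P (fun x => - F x).
Proof.
move=> [mF iF]; split; first exact: measurableT_comp mF.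
by apply: (eq_integrable measurableT _ _ _ iF) => x _; rewrite sqrrN.
Qed.

Lemma sq_integrableB {F G} : sq_integrable P F -> sq_integrable P G ->
  sq_integrable P (fun x => F x - G x).
Proof. by move=> sF sG; exact: sq_integrableD sF (sq_integrableN sG). Qed.

Lemma sq_integrable_bounded F (c : R) : measurable_fun setT F ->
  (forall x, `|F x| <= c) -> sq_integrable P F.
Proof.
move=> mF Fc; split => //.
apply: (le_integrable _ _ _ (finite_measure_integrable_cst P (c ^+ 2) measurableT)) => //.
  by apply/measurable_EFinP; exact: measurable_funX.
move=> x _ /=; rewrite lee_fin !ger0_norm ?sqr_ge0 //.
rewrite -(real_normK (num_real (F x))).
have := Fc x; have := normr_ge0 (F x); nra.
Qed.

Lemma expectE {F} : P.-integrable setT (fun x => (F x)%:E) ->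
  (\int[P]_x (F x)%:E)%E = (expect P F)%:E.
Proof. by move=> iF; rewrite fineK // integrable_fin_num. Qed.

Lemma expectD {F G} : P.-integrable setT (fun x => (F x)%:E) ->
  P.-integrable setT (fun x => (G x)%:E) ->
  expect P (fun x => F x + G x) = expect P F + expect P G.
Proof.
move=> iF iG; rewrite /expect.
under eq_integral do rewrite EFinD.
by rewrite integralD // fineD // integrable_fin_num.
Qed.

Lemma expectB {F G} : P.-integrable setT (fun x => (F x)%:E) ->
  P.-integrable setT (fun x => (G x)%:E) ->
  expect P (fun x => F x - G x) = expect P F - expect P G.
Proof.
move=> iF iG; rewrite /expect.
under eq_integral do rewrite EFinB.
by rewrite integralB // fineB // integrable_fin_num.
Qed.

Lemma expectZ {F} c : P.-integrable setT (fun x => (F x)%:E) ->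
  expect P (fun x => c * F x) = c * expect P F.
Proof.
move=> iF; rewrite /expect.
under eq_integral do rewrite EFinM.
by rewrite integralZl // fineM // integrable_fin_num.
Qed.

Lemma ler_expect {F G} : P.-integrable setT (fun x => (F x)%:E) ->
  P.-integrable setT (fun x => (G x)%:E) -> (forall x, F x <= G x) ->
  expect P F <= expect P G.
Proof.
move=> iF iG FG; apply: fine_le; rewrite ?integrable_fin_num //.
by apply: le_integral => // x _; rewrite lee_fin.
Qed.

Lemma eq_expect F G : F =1 G -> expect P F = expect P G.
Proof. by move=> FG; congr fine; apply: eq_integral => x _; rewrite FG. Qed.

Lemma expect_sqrD_orth {F G} : sq_integrable P F -> sq_integrable P G ->
  expect P (fun x => F x * G x) = 0 ->
  expect P (fun x => (F x + G x) ^+ 2) =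
  expect P (fun x => F x ^+ 2) + expect P (fun x => G x ^+ 2).
Proof.
move=> sF sG FG0; have iFG := sq_integrable_mul sF sG.
have i2FG := integrableZ_EFin 2 iFG.
rewrite (eq_expect _ (fun x => F x ^+ 2 + (2 * (F x * G x) + G x ^+ 2))); last first.
  by move=> x; ring.
rewrite (expectD sF.2 (integrableD_EFin i2FG sG.2)) (expectD i2FG sG.2).
by rewrite (expectZ 2 iFG) FG0 mulr0 add0r.
Qed.

Lemma sq_integrable_int_le {F} {C : R} : measurable_fun setT F ->
  (\int[P]_x (F x ^+ 2)%:E <= C%:E)%E -> sq_integrable P F.
Proof.
move=> mF FC; split => //; apply/integrableP; split.
  by apply/measurable_EFinP; exact: measurable_funX.
under eq_integral do rewrite gee0_abs ?lee_fin ?sqr_ge0 //.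
by apply: le_lt_trans FC _; exact: ltry.
Qed.

End square_integrable.

Section integral_indic.
Context {d} {T : measurableType d} {R : realType} (mu : measure T R).

Lemma integral_indic_mul (A : set T) (F : T -> R) :
  (\int[mu]_x (\1_A x * F x)%:E = \int[mu]_(x in A) (F x)%:E)%E.
Proof.
rewrite [RHS]integral_mkcond; apply: eq_integral => x _.
by rewrite /patch indicE; case: (x \in A); rewrite ?mul1r ?mul0r.
Qed.

Lemma integrable_indic_mul (A : set T) (F : T -> R) : measurable A ->
  measurable_fun setT F -> mu.-integrable setT (fun x => (F x)%:E) ->
  mu.-integrable setT (fun x => (\1_A x * F x)%:E).
Proof.
move=> mA mF iF; apply: (le_integrable measurableT _ _ iF).
  by apply/measurable_EFinP; apply: measurable_funM.
move=> x _; rewrite !abse_EFin lee_fin normrM indicE.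
by case: (x \in A); rewrite ?normr1 ?normr0 ?mul1r ?mul0r.
Qed.

End integral_indic.

Section cond_exp_orthogonality.
Context {d d'} {T : measurableType d} {S : measurableType d'} {R : realType}
  {mu : measure T R} {phi : T -> S} {W : T -> R} {g : S -> R}.
Hypotheses (mphi : measurable_fun setT phi) (mW : measurable_fun setT W)
  (iW : mu.-integrable setT (fun x => (W x)%:E)) (Wg : is_cond_exp mu W phi g).

Import HBNNSimple.

Let mG : measurable_fun setT (fun x => g (phi x)).
Proof. exact: measurableT_comp Wg.1 mphi. Qed.

Lemma cond_exp_nnsfun (s : {nnsfun S >-> R}) :
  (\int[mu]_x (s (phi x) * W x)%:E = \int[mu]_x (s (phi x) * g (phi x))%:E)%E.
Proof.
pose c := fset_set (s @` setT).
have mlevel i : measurable (phi @^-1` (s @^-1` [set c`_i])).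
  by rewrite -[X in measurable X]setTI; apply: mphi => //; exact: measurable_funPTI.
have expand (V : T -> R) : measurable_fun setT V ->
    mu.-integrable setT (fun x => (V x)%:E) ->
    (\int[mu]_x (s (phi x) * V x)%:E = \sum_(i < #|` c|)
      (c`_i)%:E * \int[mu]_(x in phi @^-1` (s @^-1` [set c`_i])) (V x)%:E)%E.
  move=> mV iV.
  under eq_integral do rewrite (fimfunEord s (phi _)) big_distrl /= -sumEFin.
  rewrite integral_sum //; last first.
    move=> i; under eq_fun do rewrite -mulrA EFinM.
    apply: integrableZl => //.
    exact: (integrable_indic_mul mu _ _ (mlevel i) mV iV).
  apply: eq_bigr => i _; under eq_integral do rewrite -mulrA EFinM.
  rewrite integralZl //; last first.
    exact: (integrable_indic_mul mu _ _ (mlevel i) mV iV).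
  by rewrite (integral_indic_mul mu (phi @^-1` (s @^-1` [set _]))).
by rewrite !expand //; [apply: eq_bigr => i _; rewrite Wg.2.2 | exact: Wg.2.1].
Qed.

Lemma cond_exp_ge0 (f : S -> R) : measurable_fun setT f -> (forall y, 0 <= f y) ->
  mu.-integrable setT (fun x => (f (phi x) * W x)%:E) ->
  mu.-integrable setT (fun x => (f (phi x) * g (phi x))%:E) ->
  (\int[mu]_x (f (phi x) * W x)%:E = \int[mu]_x (f (phi x) * g (phi x))%:E)%E.
Proof.
move=> mf f0 ifW ifG.
have mEf : measurable_fun setT (EFin \o f) by exact/measurable_EFinP.
have Ef0 y : setT y -> (0 <= (EFin \o f) y)%E by move=> _; rewrite lee_fin.
pose h := nnsfun_approx measurableT mEf.
have h_le_f n y : 0 <= h n y <= f y.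
  rewrite fun_ge0 /=; have := le_approx n Ef0 (I : setT y).
  by rewrite -(nnsfun_approxE measurableT mEf) lee_fin.
have cvg_approx (V : T -> R) : measurable_fun setT V ->
    mu.-integrable setT (fun x => (f (phi x) * V x)%:E) ->
    ((fun n => \int[mu]_x (h n (phi x) * V x)%:E) @ \oo -->
     \int[mu]_x (f (phi x) * V x)%:E)%E.
  move=> mV iV.
  have mhV n : measurable_fun setT (fun x => (h n (phi x) * V x)%:E).
    apply/measurable_EFinP; apply: measurable_funM => //.
    by apply: measurableT_comp => //; exact: measurable_funPT.
  have mfV : measurable_fun setT (fun x => (f (phi x) * V x)%:E).
    by apply/measurable_EFinP; apply: measurable_funM => //; exact: measurableT_comp.
  have hV_fV : {ae mu, forall x, setT x ->
      (fun n => (h n (phi x) * V x)%:E) @ \oo --> (f (phi x) * V x)%:E}.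
    apply: aeW => x _; under eq_fun do rewrite EFinM.
    rewrite EFinM; apply: cvgeZr => //.
    exact: (cvg_nnsfun_approx measurableT mEf Ef0 (x := phi x) I).
  have hV_le : {ae mu, forall x n, setT x ->
      (`|(h n (phi x) * V x)%:E| <= `|(f (phi x) * V x)%:E|)%E}.
    apply: aeW => x n _; rewrite lee_fin !normrM ler_wpM2r //.
    have /andP[h0 hf] := h_le_f n (phi x).
    by rewrite !ger0_norm // (le_trans h0 hf).
  have [] // := dominated_convergence measurableT mhV mfV hV_fV
    (integrable_abse iV) hV_le.
have hW_hG n : (\int[mu]_x (h n (phi x) * W x)%:E =
    \int[mu]_x (h n (phi x) * g (phi x))%:E)%E by exact: cond_exp_nnsfun.
have := cvg_approx W mW ifW; rewrite (funext hW_hG) => cW.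
exact: cvg_unique cW (cvg_approx _ mG ifG).
Qed.

Lemma cond_exp_mul (psi : S -> R) : measurable_fun setT psi ->
  mu.-integrable setT (fun x => (psi (phi x) * W x)%:E) ->
  mu.-integrable setT (fun x => (psi (phi x) * g (phi x))%:E) ->
  (\int[mu]_x (psi (phi x) * W x)%:E = \int[mu]_x (psi (phi x) * g (phi x))%:E)%E.
Proof.
move=> mpsi ipW ipG.
have mpos := measurable_funrpos mpsi; have mneg := measurable_funrneg mpsi.
have dominated (q : S -> R) (V : T -> R) : measurable_fun setT q ->
    measurable_fun setT V -> (forall y, `|q y| <= `|psi y|) ->
    mu.-integrable setT (fun x => (psi (phi x) * V x)%:E) ->
    mu.-integrable setT (fun x => (q (phi x) * V x)%:E).
  move=> mq mV qpsi iV; apply: (le_integrable measurableT _ _ iV).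
    by apply/measurable_EFinP; apply: measurable_funM => //; exact: measurableT_comp.
  by move=> x _; rewrite !abse_EFin lee_fin !normrM ler_wpM2r.
have pos_le y : `|psi^\+ y| <= `|psi y|.
  by rewrite ger0_norm ?funrpos_ge0 // /funrpos ge_max normr_ge0 ler_norm.
have neg_le y : `|psi^\- y| <= `|psi y|.
  by rewrite ger0_norm ?funrneg_ge0 // /funrneg ge_max normr_ge0 -normrN ler_norm.
have split_int (V : T -> R) :
    mu.-integrable setT (fun x => (psi^\+ (phi x) * V x)%:E) ->
    mu.-integrable setT (fun x => (psi^\- (phi x) * V x)%:E) ->
    (\int[mu]_x (psi (phi x) * V x)%:E =
     \int[mu]_x (psi^\+ (phi x) * V x)%:E - \int[mu]_x (psi^\- (phi x) * V x)%:E)%E.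
  move=> i1 i2; rewrite -integralB //; apply: eq_integral => x _.
  by rewrite -EFinB -mulrBl -[in LHS](funrposBneg psi).
have iWp := dominated _ W mpos mW pos_le ipW.
have iWn := dominated _ W mneg mW neg_le ipW.
have iGp := dominated _ _ mpos mG pos_le ipG.
have iGn := dominated _ _ mneg mG neg_le ipG.
rewrite (split_int W iWp iWn) (split_int _ iGp iGn).
rewrite (cond_exp_ge0 _ mpos (@funrpos_ge0 _ _ psi) iWp iGp).
by rewrite (cond_exp_ge0 _ mneg (@funrneg_ge0 _ _ psi) iWn iGn).
Qed.

End cond_exp_orthogonality.

Section cond_exp_square_integrable.
Context {d d'} {T : measurableType d} {S : measurableType d'} {R : realType}
  {P : probability T R} {phi : T -> S} {W : T -> R} {g : S -> R}.
Hypotheses (mphi : measurable_fun setT phi) (sW : sq_integrable P W)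
  (Wg : is_cond_exp P W phi g).

Let iW : P.-integrable setT (fun x => (W x)%:E).
Proof. exact: sq_integrable_integrable sW. Qed.

(* [g \o phi] is not yet known to be square integrable, so [E[g(phi)^2] <= E[W^2]]
   is first proved for the bounded truncations [trunc n], where
   [E[t^2] = E[t g(phi)] = E[t W] <= (E[W^2] + E[t^2]) / 2]. *)
Let trunc n y := g y * \1_[set y | `|g y| <= n%:R] y.

Let measurable_trunc n : measurable_fun setT (trunc n).
Proof.
have mg := Wg.1; apply: measurable_funM => //; apply: measurable_indic.
rewrite -[X in measurable X]setTI.
exact: (@measurable_fun_le _ _ _ setT (fun y => `|g y|) (cst n%:R) measurableT
  (measurableT_comp (@normr_measurable R setT) mg) (measurable_cst _)).
Qed.

Let sq_integrable_trunc n : sq_integrable P (fun x => trunc n (phi x)).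
Proof.
apply: (sq_integrable_bounded _ n%:R); first exact: measurableT_comp.
move=> x; rewrite /trunc indicE; case: (boolP (_ \in _)) => [/set_mem|_].
  by rewrite mulr1.
by rewrite mulr0 normr0.
Qed.

Let expect_trunc_sqr_le n :
  expect P (fun x => trunc n (phi x) ^+ 2) <= expect P (fun x => W x ^+ 2).
Proof.
have st := sq_integrable_trunc n; have itW := sq_integrable_mul st sW.
have t2_tg x : trunc n (phi x) ^+ 2 = trunc n (phi x) * g (phi x).
  by rewrite /trunc indicE expr2; case: (_ \in _); rewrite ?mulr1 ?mulr0 ?mul0r.
have itg : P.-integrable setT (fun x => (trunc n (phi x) * g (phi x))%:E).
  by apply: (eq_integrable measurableT _ _ _ st.2) => x _; rewrite t2_tg.
have t2_tW : expect P (fun x => trunc n (phi x) ^+ 2) =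
    expect P (fun x => trunc n (phi x) * W x).
  rewrite (eq_expect _ _ t2_tg); congr fine; apply/esym.
  exact: (cond_exp_mul mphi sW.1 iW Wg _ (measurable_trunc n) itW itg).
have amgm : 2 * expect P (fun x => trunc n (phi x) * W x) <=
    expect P (fun x => W x ^+ 2) + expect P (fun x => trunc n (phi x) ^+ 2).
  rewrite -(expectZ 2 itW) -(expectD sW.2 st.2).
  apply: ler_expect; [exact: integrableZ_EFin | exact: integrableD_EFin sW.2 st.2|].
  by move=> x; have := sqr_ge0 (W x - trunc n (phi x)); nra.
by rewrite -t2_tW in amgm; lra.
Qed.

Lemma cond_exp_sq_integrable : sq_integrable P (fun x => g (phi x)).
Proof.
have mG : measurable_fun setT (fun x => g (phi x)) := measurableT_comp Wg.1 mphi.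
split => //; apply/integrableP; split.
  by apply/measurable_EFinP; exact: measurable_funX.
pose t2 n x := ((trunc n (phi x)) ^+ 2)%:E.
have mt2 n : measurable_fun setT (t2 n).
  by apply/measurable_EFinP; apply: measurable_funX; exact: (sq_integrable_trunc n).1.
have t2_ge0 n x : setT x -> (0 <= t2 n x)%E by move=> _; rewrite lee_fin sqr_ge0.
have t2_nd x : setT x -> {homo t2^~ x : n m / (n <= m)%N >-> (n <= m)%E}.
  move=> _ n m nm; rewrite /t2 /trunc lee_fin !indicE.
  case: (boolP (phi x \in _)) => [/set_mem gn|]; last by rewrite mulr0 expr0n sqr_ge0.
  have -> : phi x \in [set y | `|g y| <= m%:R].
    by apply/mem_set; rewrite /= (le_trans gn) ?ler_nat.
  by rewrite mulr1.
have t2_lim x : limn (t2^~ x) = ((g (phi x)) ^+ 2)%:E.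
  apply: cvg_lim => //; apply: cvg_near_cst; near=> n.
  rewrite /t2 /trunc indicE.
  have -> : phi x \in [set y | `|g y| <= n%:R].
    by apply/mem_set; near: n; exact: nbhs_infty_ger.
  by rewrite mulr1.
under eq_integral do rewrite gee0_abs ?lee_fin ?sqr_ge0 // -t2_lim.
have cvg_t2 := @cvg_monotone_convergence _ _ _ P setT measurableT t2 mt2 t2_ge0 t2_nd.
rewrite -(cvg_lim _ cvg_t2) //.
apply: (@le_lt_trans _ _ (expect P (fun x => W x ^+ 2))%:E); last exact: ltry.
apply: lime_le; first exact: cvgP cvg_t2.
apply: nearW => n.
by rewrite expectE ?lee_fin ?expect_trunc_sqr_le ?(sq_integrable_trunc n).2.
Unshelve. all: by end_near.
Qed.

Lemma cond_exp_residual_orth (psi : S -> R) : measurable_fun setT psi ->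
  sq_integrable P (fun x => psi (phi x)) ->
  expect P (fun x => (W x - g (phi x)) * psi (phi x)) = 0.
Proof.
move=> mpsi spsi; have sG := cond_exp_sq_integrable.
have iWpsi := sq_integrable_mul sW spsi; have iGpsi := sq_integrable_mul sG spsi.
rewrite (eq_expect _ _ (fun x => mulrBl (psi (phi x)) (W x) (g (phi x)))).
rewrite expectB //; apply/eqP; rewrite subr_eq0; apply/eqP; congr fine.
under eq_integral do rewrite mulrC.
rewrite (cond_exp_mul mphi sW.1 iW Wg _ mpsi); last 2 first.
- by apply: (eq_integrable measurableT _ _ _ iWpsi) => x _; rewrite mulrC.
- by apply: (eq_integrable measurableT _ _ _ iGpsi) => x _; rewrite mulrC.
by apply: eq_integral => x _; rewrite mulrC.
Qed.

End cond_exp_square_integrable.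

Section product_probability.
Context {d1 d2} {T1 : measurableType d1} {T2 : measurableType d2} {R : realType}
  {P1 : probability T1 R} {P2 : probability T2 R}.

Lemma product_measure_fst_preimage {d'} {S : measurableType d'} (F : T1 -> S)
    (A : set S) : measurable_fun setT F -> measurable A ->
  (P1 \x P2)%E ((fun w => F w.1) @^-1` A) = P1 (F @^-1` A).
Proof.
move=> mF mA; have mFA : measurable (F @^-1` A).
  by rewrite -[X in measurable X]setTI; exact: mF.
rewrite (_ : _ @^-1` A = F @^-1` A `*` setT); last first.
  by apply/seteqP; split => w /=; [move=> ?; split | case].
by rewrite product_measure1E // -[X in (_ * X)%E]/(P2 setT) probability_setT mule1.
Qed.

Lemma integrable_fst_iff {F : T1 -> \bar R} : measurable_fun setT F ->
  (P1 \x P2)%E.-integrable setT (fun w => F w.1) <-> P1.-integrable setT F.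
Proof.
move=> mF; have mF1 : measurable_fun setT (fun w : T1 * T2 => F w.1).
  exact: measurableT_comp mF measurable_fst.
rewrite (integrable12ltyP P1 P2 mF1).
under [X in (_ X < _)%E <-> _]eq_fun => x do
  rewrite /= integral_cst //= probability_setT mule1.
by split => [iF|/integrableP[]//]; apply/integrableP.
Qed.

Lemma integral_fst {F : T1 -> \bar R} : measurable_fun setT F ->
  P1.-integrable setT F -> (\int[(P1 \x P2)%E]_w F w.1 = \int[P1]_x F x)%E.
Proof.
move=> mF iF; rewrite -integral12_prod_meas1; last exact/integrable_fst_iff.
apply: eq_integral => x _.
by rewrite /fubini_F /= integral_cst //= probability_setT mule1.
Qed.

Lemma is_cond_exp_fst {d'} {S : measurableType d'} (W : T1 -> R) (phi : T1 -> S)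
    (gam : S -> R) :
  measurable_fun setT W -> measurable_fun setT phi ->
  P1.-integrable setT (fun x => (W x)%:E) ->
  is_cond_exp (P1 \x P2)%E (fun w => W w.1) (fun w => phi w.1) gam ->
  is_cond_exp P1 W phi gam.
Proof.
move=> mW mphi iW [mgam [igam Wgam]].
have mG : measurable_fun setT (fun x => (gam (phi x))%:E).
  by apply/measurable_EFinP; exact: measurableT_comp.
have iG := (integrable_fst_iff mG).1 igam.
split=> //; split=> // B mB.
have mphiB : measurable (phi @^-1` B).
  by rewrite -[X in measurable X]setTI; exact: mphi.
have fst_int (V : T1 -> R) : measurable_fun setT V ->
    P1.-integrable setT (fun x => (V x)%:E) ->
    (\int[(P1 \x P2)%E]_(w in (fun w => phi w.1) @^-1` B) (V w.1)%:E =
     \int[P1]_(x in phi @^-1` B) (V x)%:E)%E.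
  move=> mV iV; rewrite -(integral_indic_mul P1) -(integral_indic_mul (P1 \x P2)%E).
  have mF : measurable_fun setT (fun x => (\1_(phi @^-1` B) x * V x)%:E).
    by apply/measurable_EFinP; apply: measurable_funM => //; exact: measurable_indic.
  by rewrite -(integral_fst mF (integrable_indic_mul P1 _ _ mphiB mV iV)).
rewrite -(fst_int W mW iW) -(fst_int _ (measurableT_comp mgam mphi) iG).
exact: Wgam.
Qed.

Lemma cond_exp_tower_indep {d' d''} {S : measurableType d'} {S' : measurableType d''}
    (W : T1 -> R) (phi : T1 -> S) (gam : S -> R) (psi : T2 -> S -> S') (g : S' -> R) :
  measurable_fun setT W -> P1.-integrable setT (fun x => (W x)%:E) ->
  measurable_fun setT phi -> (forall z, measurable_fun setT (psi z)) ->
  measurable_fun setT (fun w => psi w.2 (phi w.1)) ->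
  is_cond_exp P1 W phi gam ->
  is_cond_exp (P1 \x P2)%E (fun w => gam (phi w.1)) (fun w => psi w.2 (phi w.1)) g ->
  is_cond_exp (P1 \x P2)%E (fun w => W w.1) (fun w => psi w.2 (phi w.1)) g.
Proof.
move=> mW iW mphi mpsi mPsi [mgam [iG Wgam]] [mg [ig Gg]].
split=> //; split=> // B mB; rewrite -Gg //.
have mPsiB : measurable ((fun w => psi w.2 (phi w.1)) @^-1` B).
  by rewrite -[X in measurable X]setTI; exact: mPsi.
have fubini (V : T1 -> R) : measurable_fun setT V ->
    P1.-integrable setT (fun x => (V x)%:E) ->
    (\int[(P1 \x P2)%E]_(w in (fun w => psi w.2 (phi w.1)) @^-1` B) (V w.1)%:E =
     \int[P2]_z \int[P1]_(x in phi @^-1` (psi z @^-1` B)) (V x)%:E)%E.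
  move=> mV iV; have mV1 := measurableT_comp mV (@measurable_fst _ _ T1 T2).
  have iV1 : (P1 \x P2)%E.-integrable setT (fun w => (V w.1)%:E).
    by apply/(integrable_fst_iff (F := fun x => (V x)%:E)) => //; exact/measurable_EFinP.
  rewrite -(integral_indic_mul (P1 \x P2)%E).
  rewrite -(integral21_prod_meas1 (integrable_indic_mul _ _ _ mPsiB mV1 iV1)).
  by apply: eq_integral => z _; rewrite -(integral_indic_mul P1).
rewrite (fubini W mW iW) (fubini _ (measurableT_comp mgam mphi) iG).
apply: eq_integral => z _; apply: Wgam.
by rewrite -[X in measurable X]setTI; exact: mpsi.
Qed.

Lemma sq_integrable_comp_fst {F : T1 -> R} :
  sq_integrable P1 F -> sq_integrable (P1 \x P2)%E (fun w => F w.1).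
Proof.
move=> [mF iF]; split; first exact: measurableT_comp mF measurable_fst.
apply/(integrable_fst_iff (F := fun x => (F x ^+ 2)%:E)) => //.
by apply/measurable_EFinP; exact: measurable_funX.
Qed.

End product_probability.

Section regression_risk.
Context {d d'} {T : measurableType d} {S : measurableType d'} {R : realType}
  {P : probability T R} {phi : T -> S} {U : T -> R} {f0 g fLS : S -> R}.
Hypotheses (mphi : measurable_fun setT phi) (mf0 : measurable_fun setT f0)
  (sU : sq_integrable P U) (sf0 : sq_integrable P (fun x => f0 (phi x)))
  (Ug : is_cond_exp P U phi g)
  (Yf : is_cond_exp P (fun x => f0 (phi x) + U x) phi fLS).

Let sY : sq_integrable P (fun x => f0 (phi x) + U x).
Proof. exact: sq_integrableD sf0 sU. Qed.
Let sg : sq_integrable P (fun x => g (phi x)).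
Proof. exact: cond_exp_sq_integrable mphi sU Ug. Qed.
Let sf : sq_integrable P (fun x => fLS (phi x)).
Proof. exact: cond_exp_sq_integrable mphi sY Yf. Qed.

Lemma expect_sqr_residual_shift :
  expect P (fun x => (f0 (phi x) + U x - fLS (phi x)) ^+ 2) =
  expect P (fun x => (U x - g (phi x)) ^+ 2).
Proof.
pose a x := U x - g (phi x); pose e x := fLS (phi x) - f0 (phi x) - g (phi x).
have sa : sq_integrable P a := sq_integrableB sU sg.
have se : sq_integrable P e := sq_integrableB (sq_integrableB sf sf0) sg.
have me : measurable_fun setT (fun y => fLS y - f0 y - g y).
  by apply: measurable_funB; [apply: measurable_funB => //; exact: Yf.1 | exact: Ug.1].
have ae0 : expect P (fun x => a x * e x) = 0.
  exact: (cond_exp_residual_orth mphi sU Ug _ me se).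
(* [e] vanishes in L^2: [fLS - f0] and [g] are two versions of [E[U | phi]] *)
have ee0 : expect P (fun x => e x ^+ 2) = 0.
  have Ye0 := cond_exp_residual_orth mphi sY Yf _ me se.
  rewrite (eq_expect _ (fun x => a x * e x - (f0 (phi x) + U x - fLS (phi x)) * e x)).
    rewrite expectB ?ae0 ?Ye0 ?subr0 //; first exact: sq_integrable_mul sa se.
    exact: sq_integrable_mul (sq_integrableB sY sf) se.
  by move=> x; rewrite /a /e; ring.
have aNe0 : expect P (fun x => a x * - e x) = 0.
  rewrite (eq_expect _ (fun x => -1 * (a x * e x))); last by move=> x; ring.
  by rewrite expectZ ?ae0 ?mulr0 //; exact: sq_integrable_mul sa se.
rewrite (eq_expect _ (fun x => (a x + - e x) ^+ 2));
  last by move=> x; rewrite /a /e; ring.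
rewrite (expect_sqrD_orth sa (sq_integrableN se) aNe0).
rewrite (eq_expect (fun x => (- e x) ^+ 2) (fun x => e x ^+ 2)) ?ee0 ?addr0 //.
by move=> x; exact: sqrrN.
Qed.

Lemma risk_decomposition (h : S -> R) : measurable_fun setT h ->
  sq_integrable P (fun x => h (phi x)) ->
  (\int[P]_x ((U x - h (phi x)) ^+ 2)%:E =
   \int[P]_x ((f0 (phi x) + U x - fLS (phi x)) ^+ 2)%:E +
   \int[P]_x ((h (phi x) - g (phi x)) ^+ 2)%:E)%E.
Proof.
move=> mh sh; pose a x := U x - g (phi x); pose b x := g (phi x) - h (phi x).
have sa : sq_integrable P a := sq_integrableB sU sg.
have sb : sq_integrable P b := sq_integrableB sg sh.
have ab0 : expect P (fun x => a x * b x) = 0.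
  exact: (cond_exp_residual_orth mphi sU Ug (fun y => g y - h y)
    (measurable_funB Ug.1 mh) sb).
rewrite !expectE; [|exact: (sq_integrableB sh sg).2|exact: (sq_integrableB sY sf).2|
  exact: (sq_integrableB sU sh).2].
rewrite -EFinD expect_sqr_residual_shift; congr EFin.
rewrite (eq_expect (fun x => (U x - h (phi x)) ^+ 2) (fun x => (a x + b x) ^+ 2));
  last by move=> x; rewrite /a /b; ring.
rewrite (expect_sqrD_orth sa sb ab0); congr (_ + _).
by apply: eq_expect => x; rewrite /b; ring.
Qed.

End regression_risk.

Lemma ker_basis_trmx_mul_eq0 {F : fieldType} {p r k : nat} (M : 'M[F]_(p, r))
    (B : 'M[F]_(p, k)) :
  (forall x : 'cV[F]_p, M^T *m x = 0 <-> exists a : 'cV[F]_k, x = B *m a) ->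
  B^T *m M = 0.
Proof.
move=> kerM; apply/row_matrixP => i.
rewrite row_mul row0 -tr_col -[M]trmxK -trmx_mul.
have -> : M^T *m col i B = 0 by apply/kerM; exists (delta_mx i 0); rewrite colE.
exact: trmx0.
Qed.

Section simdg.
Context {R : realType} {p r : nat}.

Lemma measurable_V_ : measurable_fun setT (@V_ R p r).
Proof. exact: measurableT_comp measurable_snd measurable_fst. Qed.

Lemma measurable_X_ (M0 : 'M[R]_(p, r)) : measurable_fun setT (X_ M0).
Proof. exact: measurable_addmx (measurable_mulmx M0 measurable_snd) measurable_V_. Qed.

Lemma trmx_mulmx_X_ {k} (M0 : 'M[R]_(p, r)) (Rm : 'M[R]_(p, k)) w :
  Rm^T *m M0 = 0 -> Rm^T *m X_ M0 w = Rm^T *m V_ w.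
Proof. by move=> RM0; rewrite /X_ mulmxDr mulmxA RM0 mul0mx add0r. Qed.

Lemma sq_integrable_fst_of_norm2 {Lam0 : probability (R * vecT R p)%type R} :
  Lam0.-integrable setT
    (fun uv => (uv.1 ^+ 2 + \sum_(i < p) (uv.2 i ord0) ^+ 2)%:E) ->
  sq_integrable Lam0 fst.
Proof.
move=> iL; split; first exact: measurable_fst.
apply: (le_integrable measurableT _ _ iL).
  by apply/measurable_EFinP; apply: measurable_funX; exact: measurable_fst.
have sum_ge0 (v : vecT R p) : 0 <= \sum_(i < p) (v i ord0) ^+ 2.
  by apply: sumr_ge0 => i _; exact: sqr_ge0.
move=> uv _; rewrite !abse_EFin lee_fin !ger0_norm ?sqr_ge0 ?addr_ge0 ?sqr_ge0 //.
by rewrite lerDl.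
Qed.

Lemma cond_exp_U_X (M0 : 'M[R]_(p, r)) {Lam0 : probability (R * vecT R p)%type R}
    {Q : probability (vecT R r) R} (gamma0 g : vecT R p -> R) :
  sq_integrable Lam0 fst ->
  is_cond_exp (Lam0 \x Q)%E U_ V_ gamma0 ->
  is_cond_exp (Lam0 \x Q)%E (fun w => gamma0 (V_ w)) (X_ M0) g ->
  is_cond_exp (Lam0 \x Q)%E U_ (X_ M0) g.
Proof.
move=> sU1 Ugamma0 gamma0g; have iU1 := sq_integrable_integrable sU1.
have mshift (z : vecT R r) :
    measurable_fun setT (fun v : vecT R p => (M0 *m z + v : vecT R p)).
  by apply: measurable_addmx => //; exact: measurable_cst.
exact: (cond_exp_tower_indep (P1 := Lam0) (P2 := Q) (@fst R (vecT R p)) snd gamma0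
  (fun (z : vecT R r) (v : vecT R p) => (M0 *m z + v : vecT R p)) g measurable_fst iU1
  measurable_snd mshift (measurable_X_ M0)
  (is_cond_exp_fst _ _ _ measurable_fst measurable_snd iU1 Ugamma0) gamma0g).
Qed.

End simdg.

Theorem proposition4 (R : realType) (p r : nat) (hp : (0 < p)%N) (hr : (0 < r)%N)
  (f0 : vecT R p -> R) (M0 : 'M[R]_(p, r))
  (Lam0 : probability (R * vecT R p)%type R)
  (Q0 : set (probability (vecT R r) R)) (Qtr : probability (vecT R r) R)
  (* f0 measurable *)
  (Hf0 : measurable_fun setT f0)
  (* Lambda0: E[||(U,V)||^2] < oo and E[(U,V)] = 0 *)
  (HLam2 : Lam0.-integrable setT
             (fun uv => (uv.1 ^+ 2 + \sum_(i < p) (uv.2 i ord0) ^+ 2)%:E))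
  (HLamU : (\int[Lam0]_uv (uv.1)%:E = 0)%E)
  (HLamV : forall i : 'I_p, (\int[Lam0]_uv (uv.2 i ord0)%:E = 0)%E)
  (* sup_{P in P0} E_P[f0(X)^2] < oo *)
  (Hsup : exists C : R, forall Q, Q0 Q ->
     (\int[(Lam0 \x Q)%E]_w ((f0 (X_ M0 w)) ^+ 2)%:E <= C%:E)%E)
  (* training distribution *)
  (HQtr : Q0 Qtr)
  (HZmean : forall i : 'I_r, (\int[Qtr]_z (z i ord0)%:E = 0)%E)
  (HZ2 : forall i j : 'I_r, Qtr.-integrable setT (fun z => (z i ord0 * z j ord0)%:E))
  (HZpd : forall a : 'cV[R]_r, a != 0 ->
     0 < (a^T *m (\matrix_(i, j) fine (\int[Qtr]_z (z i ord0 * z j ord0)%:E)) *m a)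
           ord0 ord0)
  (* the matrix R (here Rm) *)
  (k : nat) (Rm : 'M[R]_(p, k))
  (HRlt : (\rank M0 < p)%N ->
     [/\ k = (p - \rank M0)%N, Rm^T *m Rm = 1%:M &
         forall x : 'cV[R]_p, M0^T *m x = 0 <-> exists a : 'cV[R]_k, x = Rm *m a])
  (HReq : \rank M0 = p -> k = 1%N /\ Rm = 0)
  (* gamma0 = E_Ptr[U | V = .] *)
  (gamma0 : vecT R p -> R)
  (Hgamma0 : is_cond_exp (Lam0 \x Qtr)%E U_ V_ gamma0)
  (* h = E_Ptr[gamma0(V) | R^T X = .], so that f* = bcf f0 Rm h *)
  (h : vecT R k -> R)
  (Hh : is_cond_exp (Lam0 \x Qtr)%E (fun w => gamma0 (V_ w))
          (fun w => (Rm^T *m X_ M0 w : vecT R k)) h)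
  (* g = E_Ptr[gamma0(V) | X = .] *)
  (g : vecT R p -> R)
  (Hg : is_cond_exp (Lam0 \x Qtr)%E (fun w => gamma0 (V_ w)) (X_ M0) g)
  (* fLS = E_Ptr[Y | X = .] *)
  (fLS : vecT R p -> R)
  (HfLS : is_cond_exp (Lam0 \x Qtr)%E (Y_ f0 M0) (X_ M0) fLS) :
  (* invariance: Ptr^{Y - f*(X)} = P^{Y - f*(X)} for every P in P0 *)
  (forall Q, Q0 Q -> forall A : set R, measurable A ->
     (Lam0 \x Qtr)%E ((fun w => Y_ f0 M0 w - bcf f0 Rm h (X_ M0 w)) @^-1` A) =
     (Lam0 \x Q)%E ((fun w => Y_ f0 M0 w - bcf f0 Rm h (X_ M0 w)) @^-1` A)) /\
  (* risk decomposition *)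
  (\int[(Lam0 \x Qtr)%E]_w ((Y_ f0 M0 w - bcf f0 Rm h (X_ M0 w)) ^+ 2)%:E =
   \int[(Lam0 \x Qtr)%E]_w ((Y_ f0 M0 w - fLS (X_ M0 w)) ^+ 2)%:E +
   \int[(Lam0 \x Qtr)%E]_w ((h (Rm^T *m X_ M0 w) - g (X_ M0 w)) ^+ 2)%:E)%E.
Proof.
have RM0 : Rm^T *m M0 = 0.
  have [/HRlt[_ _]|rkM0] := ltnP (\rank M0) p; first exact: ker_basis_trmx_mul_eq0.
  have /HReq[_ ->] : \rank M0 = p by apply/eqP; rewrite eqn_leq rank_leq_row.
  by rewrite trmx0 mul0mx.
have [mX mh] := (measurable_X_ M0, Hh.1).
have resid w : Y_ f0 M0 w - bcf f0 Rm h (X_ M0 w) = U_ w - h (Rm^T *m X_ M0 w).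
  by rewrite /Y_ /bcf; ring.
pose res (uv : R * vecT R p) := uv.1 - h (Rm^T *m uv.2).
have mres : measurable_fun setT res.
  apply: measurable_funB measurable_fst _.
  exact: measurableT_comp mh (measurable_mulmx _ measurable_snd).
have residUV : (fun w => Y_ f0 M0 w - bcf f0 Rm h (X_ M0 w)) = (fun w => res w.1).
  by apply/funext => w; rewrite resid trmx_mulmx_X_.
split; first by move=> Q _ A mA; rewrite residUV !product_measure_fst_preimage.
have sU1 := sq_integrable_fst_of_norm2 HLam2.
have sU : sq_integrable (Lam0 \x Qtr)%E U_ := sq_integrable_comp_fst sU1.
have sG := cond_exp_sq_integrable measurable_V_ sU Hgamma0.
have [C HC] := Hsup.
under eq_integral do rewrite resid.
apply: (@risk_decomposition _ _ _ _ _ _ (X_ M0) U_ f0 g fLS _ _ _ _ _ _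
  (fun x => h (Rm^T *m x))) => //.
- exact: sq_integrable_int_le (measurableT_comp Hf0 mX) (HC _ HQtr).
- exact: cond_exp_U_X sU1 Hgamma0 Hg.
- apply: measurableT_comp mh _.
  exact: (measurable_mulmx Rm^T (f := fun x => x) (@measurable_id _ _ setT)).
- exact: cond_exp_sq_integrable (measurable_mulmx _ mX) sG Hh.
Qed.
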